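(* Suppose the sufficient coverage assumption holds with constant $C^\dagger_{\mathrm{sc}}>0$. Then with probability at least $1-\delta$, $$\sum_{i=1}^d\mathbb E_{(s,a)\sim d^{\pi^*}}\big[\|\phi_i(s,a)\mathbf 1_i\|_{\Lambda_N^{-1}}\big]\le\sqrt{\frac{\mathrm{rank}(\Sigma_{d^{\pi^*}})}{C^\dagger_{\mathrm{sc}}}}.$$
   Context: Linear MDP setting: finite $\mathcal S$, finite $\mathcal A$, discount $\gamma\in(0,1)$, initial distribution $d_0$, known feature map $\phi:\mathcal S\times\mathcal A\to\mathbb R^d$ with $\phi_i\ge0$, and $P^o_{s,a}(s')=\sum_i\phi_i(s,a)\nu^o_i(s')$ for unknown probability distributions $\nu^o_i$ on $\mathcal S$ (so $\sum_i\phi_i(s,a)=1$). $\pi^*$ is an optimal policy and $d^{\pi^*}(s,a)=(1-\gamma)\sum_t\gamma^t\Pr(s_t=s,a_t=a)$ its discounted state-action occupancy on $P^o$ from $d_0$. Dataset of $N$ transitions with $(s_t,a_t)$ i.i.d. from $\mu$; $\Lambda_N=\frac1NI+\frac1N\sum_{t=1}^N\phi(s_t,a_t)\phi(s_t,a_t)^\top$. $\mathbf 1_i$ is the $i$-th standard basis vector of $\mathbb R^d$, $\|x\|_A=\sqrt{x^\top Ax}$. $\Sigma_{d^{\pi^*}}=\mathbb E_{d^{\pi^*}}[\phi\phi^\top]$, $\Sigma^{(i,j)}_{d^{\pi^*}}=\mathbb E_{d^{\pi^*}}[(\phi_i\mathbf 1_i)(\phi_j\mathbf 1_j)^\top]$,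 $\Sigma^i_{d^{\pi^*}}=\Sigma^{(i,i)}_{d^{\pi^*}}$; it is assumed that $\Lambda=\mathbb E_\mu[\phi\phi^\top]$ and all $\Sigma^{(i,j)}_{d^{\pi^*}}$ are positive semidefinite. Sufficient coverage assumption: for all $i\in[d]$, with probability at least $1-\delta$, $\Lambda_N\succeq\frac1NI+C^\dagger_{\mathrm{sc}}\,d\,\Sigma^i_{d^{\pi^*}}$. *)

From HB Require Import structures.
From mathcomp Require Import all_boot all_order all_algebra.
From mathcomp Require Import all_classical all_reals all_analysis.
Set Implicit Arguments. Unset Strict Implicit. Unset Printing Implicit Defensive.
Import Order.TTheory GRing.Theory Num.Theory.
Local Open Scope ring_scope.

Section LinearMDP.
Variables (R : realType) (S A : finType) (d : nat).

Definition is_distr (T : finType) (p : T -> R) :=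
  (forall x, 0 <= p x) /\ \sum_x p x = 1.
Definition is_policy (pi : S -> A -> R) := forall s, is_distr (pi s).

Definition Pker (phi : S -> A -> 'cV[R]_d) (nu : 'I_d -> S -> R)
  (s : S) (a : A) (s' : S) : R := \sum_i phi s a i 0 * nu i s'.

Fixpoint state_dist (P : S -> A -> S -> R) (pi : S -> A -> R) (rho0 : S -> R)
  (t : nat) : S -> R :=
  match t with
  | O => rho0
  | t'.+1 => fun s' => \sum_s \sum_a
       state_dist P pi rho0 t' s * pi s a * P s a s'
  end.

Definition rseries (u : nat -> R) : R := limn (fun n => \sum_(0 <= t < n) u t).

Definition value (P : S -> A -> S -> R) (gamma : R) (r : S -> A -> R)
  (pi : S -> A -> R) (s : S) : R :=
  rseries (fun t => gamma ^+ t *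
    \sum_s' \sum_a state_dist P pi (fun x => (x == s)%:R) t s' * pi s' a * r s' a).

Definition optimal_policy P gamma r (pistar : S -> A -> R) :=
  is_policy pistar /\
  forall pi, is_policy pi -> forall s, value P gamma r pi s <= value P gamma r pistar s.

Definition occupancy (P : S -> A -> S -> R) (gamma : R) (d0 : S -> R)
  (pi : S -> A -> R) (s : S) (a : A) : R :=
  (1 - gamma) * rseries (fun t => gamma ^+ t * (state_dist P pi d0 t s * pi s a)).

Definition expSA (w : S -> A -> R) (f : S -> A -> R) : R :=
  \sum_s \sum_a w s a * f s a.
Definition expSAmx (w : S -> A -> R) (f : S -> A -> 'M[R]_d) : 'M[R]_d :=
  \sum_s \sum_a w s a *: f s a.

Definition e_ (i : 'I_d) : 'cV[R]_d := delta_mx i 0.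

Definition phie (phi : S -> A -> 'cV[R]_d) (i : 'I_d) (s : S) (a : A) : 'cV[R]_d :=
  phi s a i 0 *: e_ i.

Definition psd (M : 'M[R]_d) :=
  M^T = M /\ forall x : 'cV[R]_d, 0 <= (x^T *m M *m x) 0 0.
Definition loewner_ge (M1 M2 : 'M[R]_d) := psd (M1 - M2).

Definition mxnorm (M : 'M[R]_d) (x : 'cV[R]_d) : R := Num.sqrt ((x^T *m M *m x) 0 0).

Definition Sigma (w : S -> A -> R) (phi : S -> A -> 'cV[R]_d) : 'M[R]_d :=
  expSAmx w (fun s a => phi s a *m (phi s a)^T).
Definition Sigma_ij (w : S -> A -> R) (phi : S -> A -> 'cV[R]_d) (i j : 'I_d) : 'M[R]_d :=
  expSAmx w (fun s a => phie phi i s a *m (phie phi j s a)^T).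

Definition dataset (N : nat) := {ffun 'I_N -> (S * A) * S}.

Definition data_prob N (mu : S * A -> R) (P : S -> A -> S -> R) (D : dataset N) : R :=
  \prod_t (mu (D t).1 * P (D t).1.1 (D t).1.2 (D t).2).

Definition prob_event N mu P (E : dataset N -> Prop) : R :=
  \sum_(D : dataset N | `[< E D >]) data_prob mu P D.

Definition LambdaN N (phi : S -> A -> 'cV[R]_d) (D : dataset N) : 'M[R]_d :=
  (N%:R)^-1 *: 1%:M +
  (N%:R)^-1 *: \sum_t (phi (D t).1.1 (D t).1.2 *m (phi (D t).1.1 (D t).1.2)^T).

End LinearMDP.

(* The psd assumption on the cross second moments Sigma^(i,j) = E[phi_i phi_j] 1_i 1_j^T
   forces E[phi_i phi_j] = 0 for i <> j, so Sigma is diagonal with entries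
   c_i = E[phi_i^2] = E[phi_i] (the features sum to 1), and its rank counts the
   nonzero c_i.  On the coverage event, Lambda_N >= (1/N) I + C d c_i 1_i 1_i^T gives
   (Lambda_N^-1)_ii <= 1/(C d c_i), so the i-th summand c_i sqrt((Lambda_N^-1)_ii)
   satisfies C t_i^2 <= c_i.  Cauchy-Schwarz over the support of c, together with
   sum_i c_i <= 1 (the occupancy measure has mass at most 1), bounds the sum by
   sqrt(rank Sigma / C).  The coverage event has probability >= 1 - delta, and the
   bound holds on all of it. *)

From HB Require Import structures.
From mathcomp Require Import all_boot all_order all_algebra.
From mathcomp Require Import all_classical all_reals all_analysis.
From mathcomp Require Import ring lra.

Set Implicit Arguments.
Unset Strict Implicit.
Unset Printing Implicit Defensive.

Import Order.TTheory GRing.Theory Num.Theory.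
Local Open Scope ring_scope.

Lemma sqr_sum_le_card_sumsq (R : realDomainType) (I : finType) (K : {set I})
    (f : I -> R) :
  (\sum_(i in K) f i) ^+ 2 <= #|K|%:R * \sum_(i in K) f i ^+ 2.
Proof.
have amgm i j : 2 * (f i * f j) <= f i ^+ 2 + f j ^+ 2.
  by have := sqr_ge0 (f i - f j); rewrite sqrrB -mulr_natr; lra.
have sumsqE : \sum_(i in K) \sum_(j in K) (f i ^+ 2 + f j ^+ 2)
    = 2 * (#|K|%:R * \sum_(i in K) f i ^+ 2).
  under eq_bigr do rewrite big_split /= sumr_const.
  by rewrite big_split /= sumr_const sumrMnl -mulr2n !mulr_natl.
rewrite -(ler_pM2l (ltr0Sn R 1)) -sumsqE expr2 mulr_suml mulr_sumr.
by apply: ler_sum => i _; rewrite mulr_sumr mulr_sumr; apply: ler_sum => j _; exact: amgm.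
Qed.

Lemma sum_le_sqrt_card_support (R : rcfType) (I : finType) (t c : I -> R)
    (C : R) (r : nat) :
  0 < C -> (forall i, 0 <= t i) -> (forall i, c i = 0 -> t i = 0) ->
  (forall i, C * t i ^+ 2 <= c i) -> \sum_i c i <= 1 ->
  (#|[set i | (c i != 0)%R]| <= r)%N ->
  \sum_i t i <= Num.sqrt (r%:R / C).
Proof.
move=> C_gt0 t_ge0 t_supp tc c_le1 card_le.
set K := [set i | c i != 0] in card_le *.
have tK : \sum_i t i = \sum_(i in K) t i.
  rewrite [RHS]big_mkcond; apply: eq_bigr => i _; rewrite inE.
  by case: eqP => // /t_supp.
have tsq_le : \sum_(i in K) t i ^+ 2 <= C^-1.
  have c_ge0 i : 0 <= c i.
    by apply: le_trans (tc i); rewrite mulr_ge0 ?sqr_ge0 ?(ltW C_gt0).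
  rewrite -[C^-1]mulr1 ler_pdivlMl // mulr_sumr; apply: le_trans c_le1.
  rewrite [X in _ <= X](bigID (mem K)) /= -[X in X <= _]addr0.
  by apply: lerD; [apply: ler_sum => i _ | apply: sumr_ge0].
rewrite tK -[\sum_(i in K) _]ger0_norm ?sumr_ge0 // -sqrtr_sqr.
rewrite ler_sqrt; last by rewrite divr_ge0 ?ler0n ?(ltW C_gt0).
apply: le_trans (sqr_sum_le_card_sumsq K t) _.
apply: le_trans (ler_wpM2l (ler0n _ _) tsq_le) _.
by rewrite ler_pM2r ?invr_gt0 // ler_nat.
Qed.

Section QuadraticForm.
Variables (R : comPzRingType) (n : nat).

Definition qform (M : 'M[R]_n) (x : 'cV[R]_n) : R := (x^T *m M *m x) 0 0.

Lemma qformD (M1 M2 : 'M[R]_n) x : qform (M1 + M2) x = qform M1 x + qform M2 x.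
Proof. by rewrite /qform mulmxDr mulmxDl mxE. Qed.

Lemma qformB (M1 M2 : 'M[R]_n) x : qform (M1 - M2) x = qform M1 x - qform M2 x.
Proof. by rewrite /qform mulmxBr mulmxBl mxE [in X in _ + X]mxE. Qed.

Lemma qformZ a (M : 'M[R]_n) x : qform (a *: M) x = a * qform M x.
Proof. by rewrite /qform -scalemxAr -scalemxAl mxE. Qed.

Lemma qformZv a (M : 'M[R]_n) x : qform M (a *: x) = a ^+ 2 * qform M x.
Proof. by rewrite /qform linearZ /= mxE linearZ /= -!scalemxAl mxE mulrA expr2. Qed.

Lemma qform1 x : qform 1%:M x = \sum_j x j 0 ^+ 2.
Proof. by rewrite /qform mulmx1 mxE; apply: eq_bigr => j _; rewrite mxE expr2. Qed.

Lemma qform_delta (M : 'M[R]_n) i : qform M (delta_mx i 0) = M i i.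
Proof. by rewrite /qform trmx_delta -rowE -colE !mxE. Qed.

Lemma qform_delta_diag x i : qform (delta_mx i i) x = x i 0 ^+ 2.
Proof.
rewrite /qform -(mul_delta_mx (0 : 'I_1)) mulmxA -mulmxA -rowE -colE.
by rewrite mxE big_ord1 !mxE expr2.
Qed.

End QuadraticForm.

Lemma loewner_ge_qform (R : realType) n (M1 M2 : 'M[R]_n) x :
  loewner_ge M1 M2 -> qform M2 x <= qform M1 x.
Proof. by case=> _ /(_ x); rewrite -/(qform _ _) qformB subr_ge0. Qed.

Section CoerciveForm.
Variables (R : realFieldType) (n : nat) (L : 'M[R]_n) (eps : R).
Hypothesis eps_gt0 : 0 < eps.

Lemma qform_coercive_unitmx :
  (forall x : 'cV[R]_n, eps * \sum_j x j 0 ^+ 2 <= qform L x) -> L \in unitmx.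
Proof.
move=> coerc; rewrite -row_free_unit -kermx_eq0; apply/eqP/row_matrixP => p.
set u := row p (kermx L); have uL : u *m L = 0 by rewrite -row_mul mulmx_ker row0.
have := coerc u^T; rewrite /qform trmxK uL mul0mx mxE pmulr_rle0 // => sq_le0.
have uT_eq0 j : u^T j 0 = 0.
  apply/eqP; rewrite -sqrf_eq0 eq_le sqr_ge0 andbT; apply: le_trans sq_le0.
  by rewrite (bigD1 j) //= lerDl sumr_ge0 // => k _; rewrite sqr_ge0.
by rewrite row0; apply/rowP => j; have := uT_eq0 j; rewrite !mxE.
Qed.

Lemma invmx_diag_le (b : R) i :
  0 <= b -> (forall x : 'cV[R]_n, eps * \sum_j x j 0 ^+ 2 + b * x i 0 ^+ 2 <= qform L x) ->
  [/\ L \in unitmx, 0 <= invmx L i i & (eps + b) * invmx L i i <= 1].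
Proof.
move=> b_ge0 lowb.
have coerc (x : 'cV[R]_n) : eps * \sum_j x j 0 ^+ 2 <= qform L x.
  by apply: le_trans (lowb x); rewrite lerDl mulr_ge0 ?sqr_ge0.
have L_unit := qform_coercive_unitmx coerc.
(* x := L^-1 1_i has x^T L x = x_i = (L^-1)_ii. *)
pose x := invmx L *m delta_mx i 0 : 'cV[R]_n; set v := invmx L i i.
have xi : x i 0 = v by rewrite /x -colE mxE.
have qx : qform L x = v.
  by rewrite /qform -mulmxA [L *m _]mulmxA mulmxV // mul1mx -colE mxE [x^T 0 i]mxE.
have v_ge0 : 0 <= v.
  rewrite -qx; apply: le_trans (coerc x); rewrite mulr_ge0 ?(ltW eps_gt0) //.
  by apply: sumr_ge0 => j _; rewrite sqr_ge0.
have v_sq : (eps + b) * v ^+ 2 <= v.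
  rewrite -{1}xi -qx mulrDl; apply: le_trans (lowb x); rewrite lerD2r.
  by rewrite ler_pM2l // (bigD1 i) //= lerDl sumr_ge0 // => j _; rewrite sqr_ge0.
split => //; have [->|v_neq0] := eqVneq v 0; first by rewrite mulr0.
have v_gt0 : 0 < v by rewrite lt_def v_neq0 v_ge0.
by rewrite -(ler_pM2r v_gt0) mul1r -mulrA -expr2.
Qed.

End CoerciveForm.

Lemma card_support_le_rank_diag (F : fieldType) n (v : 'rV[F]_n) :
  (#|[set i | (v 0 i != 0)%R]| <= \rank (diag_mx v))%N.
Proof.
set K := [set i | v 0 i != 0].
pose B : 'M[F]_(#|K|, n) := \matrix_(p, j) (@enum_val _ (mem K) p == j)%:R.
pose B' : 'M[F]_(#|K|, n) := \matrix_(p, j) ((@enum_val _ (mem K) p == j)%:R / v 0 j).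
(* B selects the support of v and has orthonormal rows, and B' *m diag_mx v = B. *)
have B'M : B' *m diag_mx v = B.
  apply/matrixP => p j; rewrite mul_mx_diag !mxE.
  have [<-|] := eqVneq (enum_val p) j; last by rewrite !mul0r.
  by have := enum_valP p; rewrite inE => v_neq0; rewrite mul1r mulVf.
have BBt : B *m B^T = 1%:M.
  apply/matrixP => p q; rewrite !mxE (bigD1 (enum_val p)) //= big1; last first.
    by move=> l /negbTE nl; rewrite !mxE eq_sym nl mul0r.
  by rewrite !mxE eqxx mul1r addr0 (inj_eq enum_val_inj) eq_sym.
apply: leq_trans (mxrankM_maxr B' _); rewrite B'M.
by rewrite -{1}(mxrank1 F #|K|) -BBt mxrankM_maxl.
Qed.

Lemma geometric_partial_sum_le (R : realFieldType) (gamma : R) n :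
  0 <= gamma < 1 -> \sum_(0 <= t < n) gamma ^+ t <= (1 - gamma)^-1.
Proof.
case/andP=> g_ge0 g_lt1; have g1_gt0 : 0 < 1 - gamma by rewrite subr_gt0.
rewrite -[_^-1]mulr1 ler_pdivlMl // big_mkord.
have -> : (1 - gamma) * \sum_(i < n) gamma ^+ i = 1 - gamma ^+ n.
  by apply: oppr_inj; rewrite opprB subrX1 -mulNr opprB.
by rewrite lerBlDr lerDl exprn_ge0.
Qed.

Lemma rseries_sum_le (R : realType) (I : finType) (u : I -> nat -> R) (B : R) :
  (forall j t, 0 <= u j t) -> (forall n, \sum_j \sum_(0 <= t < n) u j t <= B) ->
  \sum_j rseries (u j) <= B.
Proof.
move=> u_ge0 partial_le; pose U j n := \sum_(0 <= t < n) u j t.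
have U_le j n : U j n <= B.
  apply: le_trans (partial_le n); rewrite (bigD1 j) //= lerDl.
  by apply: sumr_ge0 => k _; apply: sumr_ge0.
have U_cvg j : cvgn (U j).
  apply: nondecreasing_is_cvgn; last by exists B => _ [n _ <-].
  by apply/nondecreasing_seqP => n; rewrite /U big_nat_recr //= lerDl.
have sum_cvg : ((fun n => \sum_j U j n) @ \oo --> \sum_j limn (U j))%classic.
  by apply: cvg_big => [|j _]; [exact: add_continuous | exact: U_cvg].
rewrite -(cvg_lim _ sum_cvg) //; apply: limr_le; first exact: cvgP sum_cvg.
exact: nearW.
Qed.

Section MarkovChain.
Variables (R : realType) (S A : finType) (P : S -> A -> S -> R) (pi : S -> A -> R).
Hypothesis P_ge0 : forall s a s', 0 <= P s a s'.
Hypothesis P_sum1 : forall s a, \sum_s' P s a s' = 1.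
Hypothesis pi_policy : is_policy pi.

Lemma state_action_mass (x : S -> R) :
  is_distr x -> \sum_s \sum_a x s * pi s a = 1.
Proof.
case=> _ <-; apply: eq_bigr => s _.
by rewrite -big_distrr /=; case: (pi_policy s) => _ ->; rewrite mulr1.
Qed.

Lemma state_dist_distr rho0 t : is_distr rho0 -> is_distr (state_dist P pi rho0 t).
Proof.
move=> rho0_distr; elim: t => [|t IH] //=; split.
  move=> s'; apply: sumr_ge0 => s _; apply: sumr_ge0 => a _.
  by rewrite !mulr_ge0 ?P_ge0 //; [case: IH | case: (pi_policy s)].
rewrite exchange_big /= -(state_action_mass IH); apply: eq_bigr => s _.
by rewrite exchange_big; apply: eq_bigr => a _; rewrite -big_distrr /= P_sum1 mulr1.
Qed.

Lemma occupancy_mass_le1 (gamma : R) d0 : 0 < gamma < 1 -> is_distr d0 ->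
  \sum_s \sum_a occupancy P gamma d0 pi s a <= 1.
Proof.
case/andP=> g_gt0 g_lt1 d0_distr; have g1_gt0 : 0 < 1 - gamma by rewrite subr_gt0.
rewrite /occupancy pair_bigA /= -mulr_sumr -ler_pdivlMl // mulr1.
apply: rseries_sum_le => [[s a] t | n] /=.
  rewrite mulr_ge0 ?exprn_ge0 ?(ltW g_gt0) // mulr_ge0 //.
    by case: (state_dist_distr t d0_distr).
  by case: (pi_policy s).
rewrite exchange_big /=.
apply: le_trans (geometric_partial_sum_le n _); last by rewrite (ltW g_gt0).
apply: ler_sum => t _; rewrite -mulr_sumr.
rewrite -(pair_bigA _ (fun s a => state_dist P pi d0 t s * pi s a)) /=.
by rewrite state_action_mass ?mulr1 //; apply: state_dist_distr.
Qed.

End MarkovChain.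

Section LinearKernel.
Variables (R : realType) (S A : finType) (d : nat).
Variables (phi : S -> A -> 'cV[R]_d) (nu : 'I_d -> S -> R).
Hypothesis phi_ge0 : forall s a i, 0 <= phi s a i 0.
Hypothesis nu_distr : forall i, is_distr (nu i).

Lemma Pker_ge0 s a s' : 0 <= Pker phi nu s a s'.
Proof. by apply: sumr_ge0 => i _; rewrite mulr_ge0 //; case: (nu_distr i). Qed.

Lemma Pker_sum1 s a : \sum_i phi s a i 0 = 1 -> \sum_s' Pker phi nu s a s' = 1.
Proof.
move=> <-; rewrite /Pker exchange_big; apply: eq_bigr => i _.
by rewrite -big_distrr /=; case: (nu_distr i) => _ ->; rewrite mulr1.
Qed.

End LinearKernel.

Section Dataset.
Variables (R : realType) (S A : finType) (N : nat).
Variables (mu : S * A -> R) (P : S -> A -> S -> R).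
Hypothesis mu_ge0 : forall sa, 0 <= mu sa.
Hypothesis P_ge0 : forall s a s', 0 <= P s a s'.

Lemma data_prob_ge0 (D : dataset S A N) : 0 <= data_prob mu P D.
Proof. by apply: prodr_ge0 => t _; rewrite mulr_ge0. Qed.

Lemma prob_event_le (E1 E2 : dataset S A N -> Prop) :
  (forall D, E1 D -> E2 D) -> prob_event mu P E1 <= prob_event mu P E2.
Proof.
move=> E12; rewrite /prob_event [X in _ <= X]big_mkcond [X in X <= _]big_mkcond.
apply: ler_sum => D _; case: (asboolP (E1 D)) => [/E12|_].
  by move/asboolT ->.
by case: asboolP => // _; apply: data_prob_ge0.
Qed.

End Dataset.

Section FeatureMoments.
Variables (R : realType) (S A : finType) (d : nat).
Variables (w : S -> A -> R) (phi : S -> A -> 'cV[R]_d).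

Definition moment2 (i j : 'I_d) : R := expSA w (fun s a => phi s a i 0 * phi s a j 0).

Lemma Sigma_ijE i j : Sigma_ij w phi i j = moment2 i j *: delta_mx i j.
Proof.
rewrite /Sigma_ij /expSAmx /moment2 /expSA scaler_suml; apply: eq_bigr => s _.
rewrite scaler_suml; apply: eq_bigr => a _.
rewrite /phie /e_ [(_ *: delta_mx j 0)^T]linearZ /= -scalemxAl -scalemxAr.
by rewrite trmx_delta mul_delta_mx !scalerA mulrA.
Qed.

Lemma qform_Sigma_ij_diag i x : qform (Sigma_ij w phi i i) x = moment2 i i * x i 0 ^+ 2.
Proof. by rewrite Sigma_ijE qformZ qform_delta_diag. Qed.

Lemma SigmaE i j : Sigma w phi i j = moment2 i j.
Proof.
rewrite /Sigma /expSAmx summxE; apply: eq_bigr => s _.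
by rewrite summxE; apply: eq_bigr => a _; rewrite !mxE big_ord1 !mxE.
Qed.

Lemma psd_Sigma_ij_offdiag i j : psd (Sigma_ij w phi i j) -> i != j -> moment2 i j = 0.
Proof.
case=> + _ ij; rewrite Sigma_ijE linearZ /= trmx_delta.
move/(congr1 (fun M : 'M[R]_d => M i j)); rewrite !mxE !eqxx (negbTE ij) /=.
by rewrite mulr0 mulr1.
Qed.

Lemma psd_Sigma_ij_diag i : psd (Sigma_ij w phi i i) -> 0 <= moment2 i i.
Proof.
case=> _ /(_ (delta_mx i 0)); rewrite -/(qform _ _) qform_delta Sigma_ijE.
by rewrite !mxE !eqxx mulr1.
Qed.

Hypothesis phi_sum1 : forall s a, \sum_i phi s a i 0 = 1.

Lemma moment2_diagE i : (forall j, i != j -> moment2 i j = 0) ->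
  moment2 i i = expSA w (fun s a => phi s a i 0).
Proof.
move=> offdiag0; transitivity (\sum_j moment2 i j).
  by rewrite (bigD1 i) //= big1 ?addr0 // => j /[1!eq_sym]; apply: offdiag0.
rewrite /moment2 /expSA exchange_big; apply: eq_bigr => s _.
rewrite exchange_big; apply: eq_bigr => a _.
by rewrite -big_distrr -big_distrr /= phi_sum1 mulr1.
Qed.

Lemma sum_expSA_features :
  \sum_i expSA w (fun s a => phi s a i 0) = \sum_s \sum_a w s a.
Proof.
rewrite /expSA exchange_big; apply: eq_bigr => s _.
by rewrite exchange_big; apply: eq_bigr => a _; rewrite -big_distrr /= phi_sum1 mulr1.
Qed.

Hypothesis phi_ge0 : forall s a i, 0 <= phi s a i 0.

Lemma expSA_mxnorm_phie (M : 'M[R]_d) i :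
  expSA w (fun s a => mxnorm M (phie phi i s a))
  = expSA w (fun s a => phi s a i 0) * Num.sqrt (M i i).
Proof.
rewrite /expSA mulr_suml; apply: eq_bigr => s _; rewrite mulr_suml.
apply: eq_bigr => a _; rewrite -mulrA; congr (_ * _).
rewrite /mxnorm -/(qform _ _) /phie qformZv qform_delta sqrtrM ?sqr_ge0 //.
by rewrite sqrtr_sqr ger0_norm.
Qed.

Hypothesis Sigma_ij_psd : forall i j, psd (Sigma_ij w phi i j).

Lemma Sigma_diag : Sigma w phi = diag_mx (\row_i moment2 i i).
Proof.
apply/matrixP => i j; rewrite SigmaE !mxE.
have [<-|ij] := eqVneq i j; first by rewrite mulr1n.
by rewrite mulr0n psd_Sigma_ij_offdiag.
Qed.

Lemma expected_feature_norm_le (L : 'M[R]_d) (eps C : R) :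
  0 < eps -> 0 < C -> \sum_s \sum_a w s a <= 1 ->
  (forall i, loewner_ge L (eps *: 1%:M + (C * d%:R) *: Sigma_ij w phi i i)) ->
  \sum_i expSA w (fun s a => mxnorm (invmx L) (phie phi i s a))
  <= Num.sqrt ((\rank (Sigma w phi))%:R / C).
Proof.
move=> eps_gt0 C_gt0 w_le1 cover.
pose c i := expSA w (fun s a => phi s a i 0).
have cE i : moment2 i i = c i.
  by apply: moment2_diagE => j; apply: psd_Sigma_ij_offdiag.
have c_ge0 i : 0 <= c i by rewrite -cE psd_Sigma_ij_diag.
have invL_le i : 0 <= invmx L i i /\ (eps + C * d%:R * c i) * invmx L i i <= 1.
  have b_ge0 : 0 <= C * d%:R * c i by rewrite !mulr_ge0 ?ler0n ?(ltW C_gt0).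
  have lowb (x : 'cV[R]_d) : eps * \sum_j x j 0 ^+ 2 + C * d%:R * c i * x i 0 ^+ 2 <= qform L x.
    have := loewner_ge_qform x (cover i).
    by rewrite qformD !qformZ qform1 qform_Sigma_ij_diag cE mulrA.
  by have [_ v_ge0 v_le] := invmx_diag_le eps_gt0 b_ge0 lowb.
rewrite (eq_bigr _ (fun i _ => expSA_mxnorm_phie (invmx L) i)).
apply: (sum_le_sqrt_card_support (c := c)) => //.
- by move=> i; apply: mulr_ge0 (c_ge0 i) (sqrtr_ge0 _).
- by move=> i; rewrite -/(c i) => ->; rewrite mul0r.
- move=> i; rewrite -/(c i); have [v_ge0 v_le] := invL_le i.
  set v := invmx L i i in v_ge0 v_le *.
  have d_ge1 : 1 <= d%:R :> R by rewrite ler1n (leq_ltn_trans (leq0n i)).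
  rewrite exprMn sqr_sqrtr //.
  (* C c^2 v <= C d c^2 v = c (C d c v) <= c ((eps + C d c) v) <= c *)
  apply: (@le_trans _ _ (c i * (C * d%:R * c i * v))).
    rewrite [X in _ <= X](_ : _ = C * (c i ^+ 2 * v) * d%:R); last by ring.
    by rewrite ler_peMr // mulr_ge0 ?(ltW C_gt0) // mulr_ge0 ?sqr_ge0.
  rewrite -[X in _ <= X]mulr1 ler_wpM2l //; apply: le_trans v_le.
  by rewrite ler_wpM2r // lerDr (ltW eps_gt0).
- by rewrite sum_expSA_features.
- rewrite Sigma_diag; apply: leq_trans (card_support_le_rank_diag _).
  by apply/eq_leq/eq_card => i; rewrite !inE mxE cE.
Qed.

End FeatureMoments.

Theorem mainTheorem10 (R : realType) (S A : finType) (d N : nat)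
  (gamma : R) (d0 : S -> R) (r : S -> A -> R)
  (phi : S -> A -> 'cV[R]_d) (nu : 'I_d -> S -> R) (mu : S * A -> R)
  (pistar : S -> A -> R) (Csc delta : R) :
  0 < gamma < 1 ->
  is_distr d0 ->
  (forall s a i, 0 <= phi s a i 0) ->
  (forall s a, \sum_i phi s a i 0 = 1) ->
  (forall i, is_distr (nu i)) ->
  is_distr mu ->
  optimal_policy (Pker phi nu) gamma r pistar ->
  psd (\sum_sa mu sa *: (phi sa.1 sa.2 *m (phi sa.1 sa.2)^T)) ->
  (forall i j, psd (Sigma_ij (occupancy (Pker phi nu) gamma d0 pistar) phi i j)) ->
  (0 < N)%N ->
  0 < Csc ->
  (* sufficient coverage assumption *)
  prob_event mu (Pker phi nu) (fun D : dataset S A N =>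
     forall i, loewner_ge (LambdaN phi D)
       ((N%:R)^-1 *: 1%:M + (Csc * d%:R) *:
          Sigma_ij (occupancy (Pker phi nu) gamma d0 pistar) phi i i))
    >= 1 - delta ->
  prob_event mu (Pker phi nu) (fun D : dataset S A N =>
     \sum_i expSA (occupancy (Pker phi nu) gamma d0 pistar)
              (fun s a => mxnorm (invmx (LambdaN phi D)) (phie phi i s a))
     <= Num.sqrt ((\rank (Sigma (occupancy (Pker phi nu) gamma d0 pistar) phi))%:R / Csc))
    >= 1 - delta.
Proof.
move=> g01 d0_distr phi_ge0 phi_sum1 nu_distr mu_distr [pistar_policy _] _
  Sigma_ij_psd N_gt0 C_gt0 coverage.
have P_ge0 := Pker_ge0 phi_ge0 nu_distr.
have P_sum1 s a := Pker_sum1 nu_distr (phi_sum1 s a).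
apply: le_trans coverage _; apply: prob_event_le => // [sa | D cover_D].
  by case: mu_distr.
apply: expected_feature_norm_le cover_D => //.
- by rewrite invr_gt0 ltr0n.
- exact: occupancy_mass_le1.
Qed.
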